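(* Let $k\ge2$ and let $\tau\in\mathcal{S}_k$ be layered. Then there is a unique involution $\tilde\tau\in\mathcal{S}_{k+2}$ whose length-$k$ initial pattern equals $\tau$ and whose length-$(k+1)$ initial pattern is not an involution.
   Context: $\tau\in\mathcal{S}_k$ is layered if for some composition $(a_1,\ldots,a_m)$ of $k$ (all $a_i\ge1$), $\tau$ consists of the first $a_1$ positive integers in decreasing order, followed by the next $a_2$ positive integers in decreasing order, and so on. The pattern of a word of $j$ distinct letters is its order-preserving relabeling by $\{1,\ldots,j\}$; the length-$j$ initial pattern of a permutation $\sigma$ is the pattern of $\sigma_1\ldots\sigma_j$. *)

(* Permutations of {0,...,n-1} are 'S_n; values are 0-based. *)
From mathcomp Require Import all_boot all_fingroup.
Set Implicit Arguments. Unset Strict Implicit. Unset Printing Implicit Defensive.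

Definition word n (s : 'S_n) : seq nat := [seq val (s i) | i <- enum 'I_n].

(* pattern (order-preserving relabeling by {0,...,j-1}) of a word of distinct letters *)
Definition pattern (w : seq nat) : seq nat := [seq count (fun y => y < x) w | x <- w].

Definition init_pattern n (j : nat) (s : 'S_n) : seq nat := pattern (take j (word s)).

Fixpoint layered_word (o : nat) (c : seq nat) : seq nat :=
  match c with
  | [::] => [::]
  | a :: c' => rev (iota o a) ++ layered_word (o + a) c'
  end.

Definition layered k (t : 'S_k) : Prop :=
  exists c : seq nat, all (fun a => 0 < a) c /\ sumn c = k /\ word t = layered_word 0 c.

Definition involutive_perm n (s : 'S_n) : Prop := forall i, s (s i) = i.

Definition involutive_word (w : seq nat) : Prop :=
  forall i, i < size w -> nth 0 w (nth 0 w i) = i.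

From mathcomp Require Import all_boot all_fingroup zify.
Set Implicit Arguments. Unset Strict Implicit. Unset Printing Implicit Defensive.

(* A permutation word of length n+1 is recovered from the pattern p of its
   first n letters and its last letter x: shift every letter of p that is at
   least x up by one and append x ([extend_word p x]).  Hence the involutions
   of length k+2 with initial k-pattern tau are the double extensions of tau
   by letters x, y that are involutions, and it suffices to show that exactly
   one pair (x, y) also makes the single extension by x a non-involution.
   If y >= k the single extension inherits involutivity; otherwise y is
   matched with the largest letter k+1, forcing tau(y) = k-1, i.e. y is the
   first position s of the last layer.  Extending by x = s just lengthens the
   last layer, so x <> s, and matching the letter at position k forces
   x = k-1 or tau(bump s x) = k-2.  When the last layer has two or more
   elements only x = k-1 survives; when it is a singleton, only x = the first
   position of the previous layer does. *)

Lemma uniq_perm_iota (w : seq nat) n :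
  uniq w -> all (fun v => v < n) w -> size w = n -> perm_eq w (iota 0 n).
Proof.
move=> uw /allP wn sw; apply: uniq_perm => //; first exact: iota_uniq.
have sub : {subset w <= iota 0 n} by move=> v /wn vn; rewrite mem_iota.
by have [] := uniq_min_size uw sub; rewrite ?size_iota ?sw.
Qed.

Lemma nth_perm_iota_lt (w : seq nat) n i :
  perm_eq w (iota 0 n) -> i < n -> nth 0 w i < n.
Proof.
move=> wn lti; rewrite -[_ < n](mem_iota 0) -(perm_mem wn) mem_nth //.
by rewrite (perm_size wn) size_iota.
Qed.

Lemma count_lt_perm_iota (w : seq nat) n v :
  perm_eq w (iota 0 n) -> v <= n -> count (fun y => y < v) w = v.
Proof.
by move=> /seq.permP -> vn; rewrite -size_filter (filter_iota_ltn 0 vn) size_iota.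
Qed.

Lemma count_lt_mem (w : seq nat) x :
  x \in w -> count (fun z => z < x) w < count (fun z => z <= x) w.
Proof.
elim: w => //= y w IH; rewrite in_cons => /orP[/eqP<-|/IH lt_w].
  by rewrite ltnn leqnn add0n add1n ltnS; apply: sub_count => z /ltnW.
by rewrite -addnS leq_add //; case: ltngtP.
Qed.

Lemma count_lt_mono (w : seq nat) :
  {in w &, {mono (fun x => count (fun z => z < x) w) : x y / x < y}}.
Proof.
move=> x y xw yw /=; case: (ltngtP x y) => [xy|yx|->]; last exact: ltnn.
- apply: leq_trans (count_lt_mem xw) _; apply: sub_count => z /= zx.
  exact: leq_ltn_trans zx xy.
- apply/negbTE; rewrite -leqNgt; apply: sub_count => z /= zy.
  exact: ltn_trans zy yx.
Qed.

Lemma pattern_map_mono (f : nat -> nat) (w : seq nat) :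
  {in w &, {mono f : x y / x < y}} -> pattern (map f w) = pattern w.
Proof.
move=> f_mono; rewrite /pattern -map_comp; apply/eq_in_map => x xw /=.
by rewrite count_map; apply: eq_in_count => y yw; exact: f_mono.
Qed.

Lemma pattern_take_pattern (w : seq nat) j :
  pattern (take j (pattern w)) = pattern (take j w).
Proof.
rewrite [pattern w]/pattern -map_take pattern_map_mono // => x y xw yw.
exact: count_lt_mono (mem_take xw) (mem_take yw).
Qed.

Lemma perm_pattern_iota (w : seq nat) :
  uniq w -> perm_eq (pattern w) (iota 0 (size w)).
Proof.
move=> uw; apply: uniq_perm_iota; last by rewrite size_map.
  rewrite map_inj_in_uniq // => x y xw yw e.
  have := count_lt_mono xw yw; have := count_lt_mono yw xw.
  rewrite /= e ltnn; lia.
apply/allP => _ /mapP[x xw ->]; apply: leq_trans (count_lt_mem xw) _.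
exact: count_size.
Qed.

Lemma pattern_perm_iota (w : seq nat) n : perm_eq w (iota 0 n) -> pattern w = w.
Proof.
move=> wn; apply: map_id_in => x xw; apply: (count_lt_perm_iota wn).
by move: xw; rewrite (perm_mem wn) mem_iota => /ltnW.
Qed.

Lemma pattern_prefix_unbump (v : seq nat) y n :
  perm_eq (rcons v y) (iota 0 n.+1) -> pattern v = map (unbump y) v.
Proof.
move=> vn; apply/eq_in_map => x xv.
have x_le : x <= n.+1.
  have : x \in rcons v y by rewrite mem_rcons in_cons xv orbT.
  by rewrite (perm_mem vn) mem_iota => /ltnW.
have := count_lt_perm_iota vn x_le; rewrite -cats1 count_cat /= addn0 /unbump; lia.
Qed.

Definition extend_word (p : seq nat) (x : nat) : seq nat := rcons (map (bump x) p) x.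

Lemma size_extend_word p x : size (extend_word p x) = (size p).+1.
Proof. by rewrite size_rcons size_map. Qed.

Lemma nth_extend_word_lt p x i :
  i < size p -> nth 0 (extend_word p x) i = bump x (nth 0 p i).
Proof. by move=> ip; rewrite nth_rcons size_map ip (nth_map 0). Qed.

Lemma nth_extend_word_last p x : nth 0 (extend_word p x) (size p) = x.
Proof. by rewrite nth_rcons size_map ltnn eqxx. Qed.

Lemma extend_word_pattern (v : seq nat) y n :
  perm_eq (rcons v y) (iota 0 n.+1) -> extend_word (pattern v) y = rcons v y.
Proof.
move=> vn; apply/esym; rewrite /extend_word (pattern_prefix_unbump vn) -map_comp.
rewrite map_id_in // => z zv.
have := perm_uniq vn; rewrite iota_uniq rcons_uniq => /andP[yv _].
by apply: unbumpK; rewrite inE; apply: contraNneq yv => <-.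
Qed.

Lemma perm_extend_word p n x :
  perm_eq p (iota 0 n) -> x <= n -> perm_eq (extend_word p x) (iota 0 n.+1).
Proof.
move=> pn xn; apply: uniq_perm_iota.
- rewrite rcons_uniq map_inj_uniq ?(perm_uniq pn) ?iota_uniq ?andbT; last first.
    exact: can_inj (bumpK x).
  by apply/mapP => -[y _ /eqP]; rewrite (negbTE (neq_bump x y)).
- rewrite all_rcons ltnS xn /= all_map; apply/allP => y /=.
  by rewrite (perm_mem pn) mem_iota /bump; lia.
- by rewrite size_extend_word (perm_size pn) size_iota.
Qed.

Lemma pattern_extend_word p n x :
  perm_eq p (iota 0 n) -> pattern (take n (extend_word p x)) = p.
Proof.
move=> pn; have sp : size (map (bump x) p) = n by rewrite size_map (perm_size pn) size_iota.
rewrite /extend_word -cats1 -{1}sp take_size_cat // pattern_map_mono ?(pattern_perm_iota pn) //.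
by move=> y z _ _; rewrite /bump; lia.
Qed.

Lemma perm_word n (s : 'S_n) : perm_eq (word s) (iota 0 n).
Proof.
rewrite /word; apply: uniq_perm_iota; last by rewrite size_map size_enum_ord.
  by rewrite map_inj_uniq ?enum_uniq // => i j /val_inj /perm_inj.
by apply/allP => _ /mapP[i _ ->]; apply: ltn_ord.
Qed.

Lemma nth_word n (s : 'S_n) (i : 'I_n) : nth 0 (word s) i = s i.
Proof. by rewrite (nth_map i) ?size_enum_ord // nth_ord_enum. Qed.

Lemma word_inj n : injective (@word n).
Proof.
by move=> s1 s2 e; apply/permP => i; apply: val_inj; rewrite /= -!nth_word e.
Qed.

Lemma word_surj n (w : seq nat) : perm_eq w (iota 0 n) -> exists s : 'S_n, word s = w.
Proof.
move=> wn; have sw : size w = n by rewrite (perm_size wn) size_iota.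
have w_lt := nth_perm_iota_lt wn.
have inj : injective (fun i : 'I_n => insubd i (nth 0 w i)).
  move=> i j /(congr1 val); rewrite !insubdK ?unfold_in ?w_lt // => /eqP.
  by rewrite nth_uniq ?sw ?(perm_uniq wn) ?iota_uniq // => /eqP/val_inj.
exists (perm inj); apply: (@eq_from_nth _ 0); first by rewrite size_map size_enum_ord sw.
move=> i; rewrite size_map size_enum_ord => lti.
by rewrite (nth_word _ (Ordinal lti)) permE /= insubdK ?unfold_in ?w_lt.
Qed.

Lemma involutive_permE n (s : 'S_n) : involutive_perm s <-> involutive_word (word s).
Proof.
rewrite /involutive_word size_map size_enum_ord; split.
  by move=> s_inv i lti; rewrite (nth_word _ (Ordinal lti)) nth_word s_inv.
by move=> w_inv i; apply: val_inj; have := w_inv i (ltn_ord i); rewrite !nth_word.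
Qed.

Lemma perm_init_pattern n (s : 'S_n) m : m <= n -> perm_eq (init_pattern m s) (iota 0 m).
Proof.
move=> mn; have uw : uniq (word s) by rewrite (perm_uniq (perm_word s)) iota_uniq.
have := perm_pattern_iota (take_uniq m uw).
by rewrite size_takel // (perm_size (perm_word s)) size_iota.
Qed.

Lemma init_pattern_word n (s : 'S_n) : init_pattern n s = word s.
Proof.
rewrite /init_pattern take_oversize ?(pattern_perm_iota (perm_word s)) //.
by rewrite size_map size_enum_ord.
Qed.

Lemma init_pattern_take n (s : 'S_n) m j :
  m <= j -> init_pattern m s = pattern (take m (init_pattern j s)).
Proof.
by move=> mj; rewrite /init_pattern pattern_take_pattern -take_min (minn_idPl mj).
Qed.

Lemma init_patternS n (s : 'S_n) m : m < n ->
  init_pattern m.+1 s = extend_word (init_pattern m s) (nth 0 (init_pattern m.+1 s) m).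
Proof.
move=> mn; set u := init_pattern m.+1 s.
have un : perm_eq u (iota 0 m.+1) by exact: perm_init_pattern.
have su : size u = m.+1 by rewrite (perm_size un) size_iota.
have e : rcons (take m u) (nth 0 u m) = u by rewrite -take_nth ?su // take_oversize ?su.
by rewrite -{1}e -(extend_word_pattern (n := m)) ?e // (init_pattern_take s (leqnSn m)).
Qed.

Definition admissible_extension (p : seq nat) (x y : nat) : Prop :=
  involutive_word (extend_word (extend_word p x) y) /\ ~ involutive_word (extend_word p x).

Lemma exists_unique_involution_of_extension k (p : seq nat) :
  perm_eq p (iota 0 k) ->
  (exists! xy : nat * nat, [/\ xy.1 <= k, xy.2 <= k.+1 & admissible_extension p xy.1 xy.2]) ->
  exists! s : 'S_(k.+2),
    involutive_perm s /\ init_pattern k s = p /\ ~ involutive_word (init_pattern k.+1 s).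
Proof.
move=> pk [[x y] [[/= xk yk [w_inv u_ninv]] xy_uniq]].
have uk := perm_extend_word pk xk.
have [s ws] := word_surj (perm_extend_word uk yk).
have su : init_pattern k.+1 s = extend_word p x.
  by rewrite (init_pattern_take s (leqnSn _)) init_pattern_word ws (pattern_extend_word _ uk).
exists s; split.
  split; first by apply/involutive_permE; rewrite ws.
  split; last by rewrite su.
  by rewrite (init_pattern_take s (leqnSn _)) su (pattern_extend_word _ pk).
move=> s' [s'_inv [s'p s'_ninv]].
set x' := nth 0 (init_pattern k.+1 s') k; set y' := nth 0 (word s') k.+1.
have u's : init_pattern k.+1 s' = extend_word p x' by rewrite init_patternS // s'p.
have w's : word s' = extend_word (extend_word p x') y'.
  by rewrite -init_pattern_word (init_patternS s' (ltnSn _)) init_pattern_word u's.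
have [ex ey] : (x', y') = (x, y).
  apply/esym/xy_uniq; split => /=.
  - by rewrite -ltnS nth_perm_iota_lt ?(perm_init_pattern s').
  - by rewrite -ltnS nth_perm_iota_lt ?(perm_word s').
  - by split; [rewrite -w's -involutive_permE | rewrite -u's].
by apply: word_inj; rewrite ws w's ex ey.
Qed.

Section DoubleExtension.
Variables (k : nat) (g : seq nat).
Hypotheses (size_g : size g = k) (g_lt : forall i, i < k -> nth 0 g i < k).
Hypothesis g_inv : involutive_word g.

Lemma nth_extend_word2_lt x y i :
  i < k -> nth 0 (extend_word (extend_word g x) y) i = bump y (bump x (nth 0 g i)).
Proof.
move=> ik; rewrite !nth_extend_word_lt ?size_extend_word ?size_g //; exact: ltnW.
Qed.

Lemma nth_extend_word2_k x y : nth 0 (extend_word (extend_word g x) y) k = bump y x.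
Proof.
by rewrite nth_extend_word_lt ?size_extend_word ?size_g // -size_g nth_extend_word_last.
Qed.

Lemma nth_extend_word2_k1 x y : nth 0 (extend_word (extend_word g x) y) k.+1 = y.
Proof.
by rewrite -size_g -(size_extend_word g x) nth_extend_word_last.
Qed.

Lemma nth_extend_word2_small x y i : i < k -> nth 0 g i < minn x y ->
  nth 0 (extend_word (extend_word g x) y) i = nth 0 g i.
Proof. by move=> ik gi; rewrite nth_extend_word2_lt // /bump; lia. Qed.

Lemma involutive_extend_word_last_ge x y : x <= k -> k <= y <= k.+1 ->
  involutive_word (extend_word (extend_word g x) y) -> involutive_word (extend_word g x).
Proof.
move=> xk /andP[ky yk] w_inv i; rewrite size_extend_word size_g ltnS => ik.
have u_lt j : j < k -> nth 0 (extend_word g x) j = bump x (nth 0 g j).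
  by move=> jk; rewrite nth_extend_word_lt ?size_g.
have u_k : nth 0 (extend_word g x) k = x by rewrite -size_g nth_extend_word_last.
have [y_k1 | y_k] : y = k.+1 \/ y = k by lia.
  have w_u j : j <= k -> nth 0 (extend_word (extend_word g x) y) j = nth 0 (extend_word g x) j.
    move=> jk; rewrite nth_extend_word_lt ?size_extend_word ?size_g ?ltnS // y_k1.
    case: (ltngtP j k) jk => [jk _|//|->]; last by rewrite u_k /bump; lia.
    by rewrite u_lt //; have := g_lt jk; rewrite /bump; lia.
  have := w_inv i; rewrite size_extend_word size_extend_word size_g !w_u //; first by apply; lia.
  case: (ltngtP i k) ik => [ik _|//|->]; last by rewrite u_k.
  by rewrite u_lt //; have := g_lt ik; rewrite /bump; lia.
have x_k : x = k.
  have := w_inv k.+1; rewrite size_extend_word size_extend_word size_g nth_extend_word2_k1 y_k.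
  by rewrite nth_extend_word2_k /bump; lia.
have u_g j : j < k -> nth 0 (extend_word g x) j = nth 0 g j.
  by move=> jk; rewrite u_lt // x_k; have := g_lt jk; rewrite /bump; lia.
case: (ltngtP i k) ik => [ik _|//|->]; last by rewrite u_k {2}x_k u_k.
by rewrite !u_g ?g_inv ?size_g ?g_lt.
Qed.

Lemma involutive_extend_word_last_lt x y : x <= k -> y < k ->
  involutive_word (extend_word (extend_word g x) y) ->
  nth 0 g y = k.-1 /\ (x = k.-1 \/ x < k.-1 /\ nth 0 g (bump y x) = k - 2).
Proof.
move=> xk yk w_inv.
have w_size : size (extend_word (extend_word g x) y) = k.+2 by rewrite !size_extend_word size_g.
have gy_lt := g_lt yk.
have := w_inv k.+1; rewrite w_size nth_extend_word2_k1 nth_extend_word2_lt // => /(_ (ltnSn _)) wy.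
have gy : nth 0 g y = k.-1 by move: wy; rewrite /bump; lia.
split=> //; have [-> | xk1] := eqVneq x k.-1; first by left.
have jk : bump y x < k by move: wy; rewrite /bump; lia.
have := w_inv k; rewrite w_size nth_extend_word2_k nth_extend_word2_lt // => /(_ (ltnW (ltnSn _))).
by move: wy; have := g_lt jk; rewrite /bump; lia.
Qed.

Lemma not_involutive_extend_word x s : s < k -> nth 0 g s = k.-1 -> x < k -> x != s ->
  ~ involutive_word (extend_word g x).
Proof.
move=> sk gs xk xs u_inv.
have us : nth 0 (extend_word g x) s = k by rewrite nth_extend_word_lt ?size_g // gs /bump; lia.
have := u_inv s; rewrite size_extend_word size_g us -{2}size_g nth_extend_word_last.
by move=> /(_ (leqW sk)) xs_eq; rewrite xs_eq eqxx in xs.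
Qed.

End DoubleExtension.

Lemma size_layered_word o c : size (layered_word o c) = sumn c.
Proof. by elim: c o => [|a c IH] o //=; rewrite size_cat size_rev size_iota IH. Qed.

Lemma layered_word_rcons o c a :
  layered_word o (rcons c a) = layered_word o c ++ rev (iota (o + sumn c) a).
Proof.
elim: c o => [|b c IH] o /=; first by rewrite addn0 cats0.
by rewrite IH catA addnA.
Qed.

Lemma nth_rev_iota m a i : i < a -> nth 0 (rev (iota m a)) i = m + a - 1 - i.
Proof. by move=> ia; rewrite nth_rev size_iota // nth_iota; lia. Qed.

Lemma nth_layered_word o c i : i < sumn c ->
  o <= nth 0 (layered_word o c) i < o + sumn c /\
  nth 0 (layered_word o c) (nth 0 (layered_word o c) i - o) = o + i.
Proof.
elim: c o i => [|a c IH] o i //= ic; rewrite !nth_cat size_rev size_iota.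
case: (ltnP i a) => ia.
  have j_lt : o + a - 1 - i - o < a by lia.
  by rewrite nth_rev_iota // j_lt nth_rev_iota //; split; lia.
have ic' : i - a < sumn c by lia.
have [/andP[lo hi] inv] := IH (o + a) _ ic'.
have j_ge : (nth 0 (layered_word (o + a) c) (i - a) - o < a) = false by lia.
by rewrite j_ge -subnDA inv; split; lia.
Qed.

Lemma layered_word_lt c i : i < sumn c -> nth 0 (layered_word 0 c) i < sumn c.
Proof. by move=> ic; have [/andP[_ ?] _] := nth_layered_word 0 ic. Qed.

Lemma layered_word_involutive c : involutive_word (layered_word 0 c).
Proof.
move=> i; rewrite size_layered_word => ic.
by have [_] := nth_layered_word 0 ic; rewrite subn0.
Qed.

Lemma nth_layered_word_rcons_low c a i : i < sumn c ->
  nth 0 (layered_word 0 (rcons c a)) i = nth 0 (layered_word 0 c) i.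
Proof. by move=> ic; rewrite layered_word_rcons nth_cat size_layered_word ic. Qed.

Lemma nth_layered_word_rcons_high c a i : sumn c <= i < sumn c + a ->
  nth 0 (layered_word 0 (rcons c a)) i = sumn c + a - 1 - (i - sumn c).
Proof.
move=> /andP[lo hi]; rewrite layered_word_rcons nth_cat size_layered_word ltnNge lo /=.
rewrite nth_rev_iota; lia.
Qed.

Lemma extend_layered_word c a :
  extend_word (layered_word 0 (rcons c a)) (sumn c) = layered_word 0 (rcons c a.+1).
Proof.
rewrite /extend_word !layered_word_rcons map_cat rcons_cat add0n; congr (_ ++ _).
  apply: map_id_in => v /(nthP 0)[i]; rewrite size_layered_word => ic <-.
  by rewrite /bump leqNgt layered_word_lt.
rewrite map_rev -rev_cons /= -[(sumn c).+1]add1n iotaDl; congr (rev (_ :: _)).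
by apply/eq_in_map => v; rewrite mem_iota /bump; lia.
Qed.

Section LayeredExtension.
Variables (c : seq nat) (a : nat).
Hypothesis a_gt0 : 0 < a.

Let s := sumn c.
Let k := s + a.
Let g := layered_word 0 (rcons c a).

Let size_g : size g = k.
Proof. by rewrite size_layered_word sumn_rcons. Qed.

Let g_lt i : i < k -> nth 0 g i < k.
Proof. by rewrite /k /s -sumn_rcons; exact: layered_word_lt. Qed.

Let g_low i : i < s -> nth 0 g i < s /\ nth 0 g (nth 0 g i) = i.
Proof.
move=> i_s; have := @layered_word_involutive (rcons c a) i.
rewrite size_layered_word sumn_rcons !nth_layered_word_rcons_low ?layered_word_lt //.
by move=> inv; split=> //; apply: inv; rewrite ltn_addr.
Qed.

Let g_high i : s <= i < k -> nth 0 g i = s + k - 1 - i.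
Proof. by move=> ik; rewrite nth_layered_word_rcons_high //; rewrite /k in ik *; lia. Qed.

Lemma admissible_layered_extension x y : x <= k -> y <= k.+1 ->
  admissible_extension g x y ->
  [/\ y = s, x != s & x = k.-1 \/ x < k.-1 /\ nth 0 g (bump s x) = k - 2].
Proof.
move=> xk yk [w_inv u_ninv].
have yk' : y < k.
  rewrite ltnNge; apply/negP => ky; apply: u_ninv.
  apply: (involutive_extend_word_last_ge size_g g_lt _ xk _ w_inv).
    exact: layered_word_involutive.
  by rewrite ky.
have [gy x_cases] := involutive_extend_word_last_lt size_g g_lt xk yk' w_inv.
have ys : y = s.
  case: (ltnP y s) => [/g_low[gy_lt _] | sy]; first by rewrite /k in gy; lia.
  by move: gy; rewrite g_high ?sy //; rewrite /k; lia.
split=> //; last by rewrite -ys.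
apply/eqP => xs; apply: u_ninv; rewrite xs extend_layered_word.
exact: layered_word_involutive.
Qed.

Lemma admissible_layered_extension_of_involutive x : x < k -> x != s ->
  involutive_word (extend_word (extend_word g x) s) -> admissible_extension g x s.
Proof.
move=> xk xs w_inv; split=> //.
apply: (not_involutive_extend_word size_g _ _ xk xs); first by rewrite /k; lia.
by rewrite g_high /k; lia.
Qed.

Section LongLastLayer.
Hypothesis a_ge2 : 2 <= a.

Lemma involutive_extend_long_last_layer :
  involutive_word (extend_word (extend_word g k.-1) s).
Proof.
have sk : s.+1 < k by rewrite /k; lia.
set w := extend_word _ _.
have w_low j : j < s -> nth 0 w j = nth 0 g j.
  by move=> js; have [gj _] := g_low js; rewrite (nth_extend_word2_small size_g); lia.
have w_mid j : s <= j < k -> nth 0 w j = if j == s then k.+1 else s + k - j.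
  move=> sjk; rewrite (nth_extend_word2_lt size_g) ?g_high //; last by lia.
  by case: eqP => [->|]; rewrite /bump; lia.
have w_k : nth 0 w k = k by rewrite (nth_extend_word2_k size_g) /bump; lia.
have w_k1 : nth 0 w k.+1 = s by rewrite (nth_extend_word2_k1 size_g).
move=> i; rewrite !size_extend_word size_g => ik.
have [i_s | si] := ltnP i s; first by have [gi gg] := g_low i_s; rewrite !w_low.
have [-> | [ii | [-> | ->]]] : i = s \/ s < i < k \/ i = k \/ i = k.+1 by lia.
- by rewrite (w_mid s) ?eqxx ?w_k1 //; lia.
- have wi : nth 0 w i = s + k - i by rewrite w_mid ?ifF //; lia.
  by rewrite wi w_mid ?ifF; lia.
- by rewrite !w_k.
- by rewrite w_k1 (w_mid s) ?eqxx //; lia.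
Qed.

Lemma long_last_layer_extension :
  exists! xy : nat * nat, [/\ xy.1 <= k, xy.2 <= k.+1 & admissible_extension g xy.1 xy.2].
Proof.
have sk : s.+2 <= k by rewrite /k; lia.
exists (k.-1, s); split.
  split=> /=; [lia | lia |].
  apply: admissible_layered_extension_of_involutive; [lia | lia |].
  exact: involutive_extend_long_last_layer.
move=> [x y] [/= xk yk /(admissible_layered_extension xk yk)[-> xs [-> // | [xk1 gj]]]].
have [js | sj] := ltnP (bump s x) s; first by have [gj_lt _] := g_low js; lia.
by move: gj; rewrite g_high ?sj /bump; lia.
Qed.

End LongLastLayer.

Section SingletonLastLayer.
Variables (c' : seq nat) (b : nat).
Hypotheses (c_rcons : c = rcons c' b) (b_gt0 : 0 < b) (a1 : a = 1).

Let r := sumn c'.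

Let s_rb : s = r + b.
Proof. by rewrite /s c_rcons sumn_rcons. Qed.

Let k_s : k = s.+1.
Proof. by rewrite /k a1 addn1. Qed.

Let g_mid i : r <= i < s -> nth 0 g i = r + s - 1 - i.
Proof.
move=> ri; rewrite nth_layered_word_rcons_low ?(andP ri).2 //.
rewrite s_rb in ri *.
by rewrite c_rcons nth_layered_word_rcons_high -/r; lia.
Qed.

Let g_lower i : i < r -> nth 0 g i < r /\ nth 0 g (nth 0 g i) = i.
Proof.
move=> ir; have i_s : i < s by lia.
have [_ gg] := g_low i_s; split=> //; rewrite nth_layered_word_rcons_low //.
by rewrite c_rcons nth_layered_word_rcons_low // layered_word_lt.
Qed.

Lemma involutive_extend_singleton_last_layer :
  involutive_word (extend_word (extend_word g r) s).
Proof.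
set w := extend_word _ _.
have w_low j : j < r -> nth 0 w j = nth 0 g j.
  by move=> jr; have [gj _] := g_lower jr; rewrite (nth_extend_word2_small size_g); lia.
have w_mid j : r <= j < s -> nth 0 w j = if j == r then k else r + s - j.
  move=> rjs; rewrite (nth_extend_word2_lt size_g) ?g_mid //; last by lia.
  by case: eqP => [->|]; rewrite /bump; lia.
have w_s : nth 0 w s = k.+1.
  by rewrite (nth_extend_word2_lt size_g) ?g_high ?leqnn /bump; lia.
have w_k : nth 0 w k = r by rewrite (nth_extend_word2_k size_g) /bump; lia.
have w_k1 : nth 0 w k.+1 = s by rewrite (nth_extend_word2_k1 size_g).
move=> i; rewrite !size_extend_word size_g => ik.
have [ir | ri] := ltnP i r; first by have [gi gg] := g_lower ir; rewrite !w_low.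
have [-> | [ii | [-> | [-> | ->]]]] : i = r \/ r < i < s \/ i = s \/ i = k \/ i = k.+1.
  by rewrite k_s in ik *; lia.
- by rewrite (w_mid r) ?eqxx ?w_k //; lia.
- have wi : nth 0 w i = r + s - i by rewrite w_mid ?ifF //; lia.
  by rewrite wi w_mid ?ifF; lia.
- by rewrite w_s w_k1.
- by rewrite w_k (w_mid r) ?eqxx //; lia.
- by rewrite w_k1 w_s.
Qed.

Lemma singleton_last_layer_extension :
  exists! xy : nat * nat, [/\ xy.1 <= k, xy.2 <= k.+1 & admissible_extension g xy.1 xy.2].
Proof.
exists (r, s); split.
  split=> /=; [lia | lia |].
  apply: admissible_layered_extension_of_involutive; [lia | rewrite neq_ltn; lia |].
  exact: involutive_extend_singleton_last_layer.
move=> [x y] [/= xk yk /(admissible_layered_extension xk yk)[-> xs [xk1 | [xk1 gj]]]].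
  by rewrite xk1 k_s /= eqxx in xs.
have bx : bump s x = x by rewrite /bump; lia.
have [xr | rx] := ltnP x r; first by have [gx _] := g_lower xr; move: gj; rewrite bx; lia.
suff -> : x = r by [].
by move: gj; rewrite bx g_mid ?rx //=; lia.
Qed.

End SingletonLastLayer.

End LayeredExtension.

Theorem mainTheorem11 (k : nat) (hk : 2 <= k) (t : 'S_k) (ht : layered t) :
  exists! s : 'S_(k.+2),
    involutive_perm s /\ init_pattern k s = word t /\
    ~ involutive_word (init_pattern k.+1 s).
Proof.
case: ht => c [c_pos [c_sum wt]].
apply: (exists_unique_involution_of_extension (perm_word t)); rewrite wt -c_sum.
clear wt; move: c_pos c_sum; case/lastP: c => [_ /= k0 | c a]; first by lia.
rewrite all_rcons sumn_rcons => /andP[a_gt0 c_pos] k_ca.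
have [a_ge2 | a1] : 2 <= a \/ a = 1 by lia.
  exact: long_last_layer_extension.
move: c_pos; case/lastP: c k_ca => [/= k1 | c b _]; first by lia.
rewrite all_rcons => /andP[b_gt0 _].
exact: singleton_last_layer_extension.
Qed.
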